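(* Let $(X,\mu)$ be a non-atomic probability measure space equipped with a tree $\mathcal{T}$, with associated dyadic maximal operator $\mathcal{M}_{\mathcal{T}}$. For every $q$ with $0<q<1$ and every $f,h$ with $0<h\le f^q$, $$\int_X(\mathcal{M}_{\mathcal{T}}\phi)^q\,d\mu\le h\,\omega_q\Big(\frac{f^q}{h}\Big)$$ for every $\phi\in L^1(X,\mu)$ with $\phi\ge0$, $\int_X\phi\,d\mu=f$, $\int_X\phi^q\,d\mu=h$.
   Context: A set $\mathcal{T}$ of measurable subsets of $X$ is a tree if: (i) $X\in\mathcal{T}$ and $\mu(I)>0$ for every $I\in\mathcal{T}$; (ii) for every $I\in\mathcal{T}$ there is a finite or countable set $C(I)\subseteq\mathcal{T}$ with at least two elements, consisting of pairwise disjoint subsets of $I$ whose union is $I$; (iii) $\mathcal{T}=\bigcup_{m\ge0}\mathcal{T}_{(m)}$ where $\mathcal{T}_{(0)}=\{X\}$ and $\mathcal{T}_{(m+1)}=\bigcup_{I\in\mathcal{T}_{(m)}}C(I)$; (iv) $\lim_{m\to\infty}\sup_{I\in\mathcal{T}_{(m)}}\mu(I)=0$. The dyadic maximal operator is $\mathcal{M}_{\mathcal{T}}\phi(x)=\sup\{\frac{1}{\mu(I)}\int_I|\phi|\,d\mu : x\in I\in\mathcal{T}\}$. Here $\omega_q(z)=[H_q^{-1}(z)]^q$ for $z\ge1$, where $H_q(z)=(1-q)z^q+qz^{q-1}$ on $[1,\infty)$ (a strictly increasing bijection onto $[1,\infty)$). *)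

From HB Require Import structures.
From mathcomp Require Import all_boot all_order all_algebra.
From mathcomp Require Import all_classical all_reals all_analysis.
Set Implicit Arguments. Unset Strict Implicit. Unset Printing Implicit Defensive.
Import Order.TTheory GRing.Theory Num.Theory.
Local Open Scope classical_set_scope.
Local Open Scope ring_scope.

Section Defs.
Context (d : measure_display) (T : measurableType d) (R : realType).

Definition non_atomic (mu : set T -> \bar R) : Prop :=
  forall A, measurable A -> (0 < mu A)%E ->
    exists B, [/\ measurable B, B `<=` A & (0 < mu B < mu A)%E].

Fixpoint tree_level (C : set T -> set (set T)) (m : nat) : set (set T) :=
  match m with
  | 0%N => [set setT]
  | m'.+1 => \bigcup_(I in tree_level C m') C I
  end.

Definition is_tree (mu : set T -> \bar R) (Tr : set (set T)) : Prop :=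
  exists C : set T -> set (set T),
  [/\
      Tr setT /\ (forall I, Tr I -> measurable I /\ (0 < mu I)%E),
      (forall I, Tr I ->
         [/\ C I `<=` Tr /\ countable (C I),
             (exists J K, [/\ C I J, C I K & J <> K]),
             (forall J K, C I J -> C I K -> J <> K -> J `&` K = set0),
             (forall J, C I J -> J `<=` I) &
             \bigcup_(J in C I) J = I]),
      Tr = \bigcup_(m in [set: nat]) tree_level C m &
      (fun m => ereal_sup [set mu I | I in tree_level C m]) @ \oo --> 0%E].

Definition dyadic_max (mu : set T -> \bar R) (Tr : set (set T))
    (phi : T -> R) (x : T) : \bar R :=
  ereal_sup [set ((fine (mu I))^-1)%:E * \int[mu]_(y in I) (`|phi y|)%:E
            | I in [set I | Tr I /\ I x]]%E.

End Defs.

Definition Hq (R : realType) (q z : R) : R :=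
  (1 - q) * powR z q + q * powR z (q - 1).

Definition Hq_inv (R : realType) (q z : R) : R :=
  xget 1 [set y | 1 <= y /\ Hq q y = z].

Definition omega_q (R : realType) (q z : R) : R := powR (Hq_inv q z) q.

(* With B(M, a) = (1 - q) M^q + q M^(q-1) a, concavity of t^q gives a^q <= B(M, a),
   with equality at a = M, so that B(max(M, A), A) <= B(M, A).  Let M_n x be the
   largest average of phi over the cells of levels 0..n containing x.  On a cell J of
   level n+1, M_(n+1) = max(M_n, avg_J phi) while M_n is constant, and B is affine in
   a; hence the integral of B(M_n, phi) decreases with n and is at most
   B(f, f) = f^q.  With X = int M_n^q and Y = int M_n^(q-1) phi this reads
   (1 - q) X + q Y <= f^q, while a^q <= B(M, a) at a = w phi gives
   h w^q <= (1 - q) X + q w Y for every w > 1.  Eliminating Y at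
   w = H_q^(-1)(f^q / h) yields X <= h omega_q(f^q / h), and monotone convergence
   lets n go to infinity. *)

From HB Require Import structures.
From mathcomp Require Import all_boot all_order all_algebra.
From mathcomp Require Import all_classical all_reals all_analysis.
From mathcomp Require Import measurable_realfun ring lra.
Import Order.TTheory GRing.Theory Num.Theory.
Import numFieldNormedType.Exports.
Set Implicit Arguments. Unset Strict Implicit. Unset Printing Implicit Defensive.
Local Open Scope classical_set_scope.
Local Open Scope ring_scope.

Lemma powR_AMGM (R : realType) (q u v : R) : 0 <= q -> q <= 1 -> 0 < u -> 0 < v ->
  powR u q * powR v (1 - q) <= q * u + (1 - q) * v.
Proof.
move=> q0 q1 u0 v0.
have := concave_ln (Itv01 q0 q1) u0 v0.
rewrite -[_ <= ln _]ler_expR expRD lnK ?posrE ?convR_gt0// !convRE /=.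
by rewrite /powR !gt_eqF// !(mulrC _ (ln _)).
Qed.

Lemma poweR_ereal_sup (R : realType) (u : nat -> R) (r : R) : 0 < r ->
  (forall n, 0 <= u n) ->
  (poweR (ereal_sup (range (fun n => (u n)%:E))) r =
   ereal_sup (range (fun n => (powR (u n) r)%:E)))%E.
Proof.
move=> r0 u0; set S := ereal_sup _; set P := ereal_sup _.
have mem0y (x : \bar R) : (0 <= x)%E -> x \in `[0%E, +oo%E].
  by rewrite in_itv /= leey andbT.
have S0 : (0 <= S)%E.
  apply: (@le_trans _ _ (u 0%N)%:E); first by rewrite lee_fin.
  by apply: ereal_sup_ubound; exists 0%N.
have P0 : (0 <= P)%E.
  apply: (@le_trans _ _ (powR (u 0%N) r)%:E); first by rewrite lee_fin powR_ge0.
  by apply: ereal_sup_ubound; exists 0%N.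
apply/eqP; rewrite eq_le; apply/andP; split.
  have : (S <= poweR P r^-1)%E.
    apply: ge_ereal_sup => _ [n _ <-].
    have -> : (u n)%:E = poweR (powR (u n) r)%:E r^-1.
      by rewrite poweR_EFin -powRrM mulfV ?gt_eqF// powRr1.
    apply: gt0_ler_poweR; rewrite ?invr_ge0 ?(ltW r0) ?mem0y ?lee_fin ?powR_ge0 ?poweR_ge0//.
    by apply: ereal_sup_ubound; exists n.
  move/(gt0_ler_poweR (ltW r0)); rewrite -poweRrM mulVf ?gt_eqF// poweRe1//.
  by apply; rewrite mem0y ?poweR_ge0.
apply: ge_ereal_sup => _ [n _ <-]; rewrite -poweR_EFin.
apply: gt0_ler_poweR; rewrite ?(ltW r0) ?mem0y ?lee_fin//.
by apply: ereal_sup_ubound; exists n.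
Qed.

Lemma fin_num_of_ge0_lincomb_le (R : realType) (a b c : R) (X Y : \bar R) :
  0 < a -> 0 < b -> (0 <= X)%E -> (0 <= Y)%E -> (a%:E * X + b%:E * Y <= c%:E)%E ->
  X \is a fin_num /\ Y \is a fin_num.
Proof.
move: X Y => [x| |] [y| |] //= a0 b0 _ _; rewrite ?gt0_mulye ?lte_fin//.
all: by rewrite ?gt0_mulye ?gt0_muley ?lte_fin// ?addey ?addye// leNgt ltey.
Qed.

Definition bellman (R : realType) (q M a : R) : R :=
  (1 - q) * powR M q + q * powR M (q - 1) * a.

Section BellmanFunction.
Variables (R : realType) (q : R).
Hypothesis q01 : 0 < q < 1.

Let q_gt0 : 0 < q. Proof. by case/andP: q01. Qed.
Let q_lt1 : q < 1. Proof. by case/andP: q01. Qed.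

Lemma bellman_diag M : 0 <= M -> bellman q M M = powR M q.
Proof.
move=> M0; rewrite /bellman -mulrA (mulrC _ M) mulr_powRB1 //.
by rewrite -mulrDl subrK mul1r.
Qed.

Lemma powR_le_bellman u M : 0 <= u -> 0 < M -> powR u q <= bellman q M u.
Proof.
rewrite le_eqVlt => /predU1P[<- M0|u0 M0].
  by rewrite powR0 ?gt_eqF// /bellman mulr0 addr0 mulr_ge0 ?powR_ge0 ?subr_ge0 ?(ltW q_lt1).
have M1 : powR M (1 - q) * powR M (q - 1) = 1.
  rewrite -powRD; last by rewrite (gt_eqF M0) implybT.
  by rewrite addrA subrK subrr powRr0.
have := powR_AMGM (ltW q_gt0) (ltW q_lt1) u0 M0.
rewrite -(ler_pM2r (powR_gt0 (q - 1) M0)) -mulrA M1 mulr1 => /le_trans; apply.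
rewrite /bellman mulrDl -(mulrA (1 - q)) mulr_powRB1 ?(ltW M0)// addrC.
by rewrite (mulrAC q u).
Qed.

Lemma bellman_max M A : 0 < M -> 0 <= A ->
  bellman q (Num.max M A) A <= bellman q M A.
Proof.
move=> M0 A0; have [//|MA] := leP A M.
by rewrite bellman_diag // powR_le_bellman.
Qed.

Lemma Hq_bellman v : Hq q v = bellman q v 1.
Proof. by rewrite /Hq /bellman mulr1. Qed.

Lemma Hq1 : Hq q 1 = 1.
Proof. by rewrite /Hq !powR1 !mulr1 subrK. Qed.

Lemma Hq_ge1 v : 0 < v -> 1 <= Hq q v.
Proof. by move=> v0; have := powR_le_bellman ler01 v0; rewrite powR1 Hq_bellman. Qed.

Lemma Hq_surjective z : 1 <= z -> exists2 y, 1 <= y & Hq q y = z.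
Proof.
move=> z1; have q1_gt0 : 0 < 1 - q by rewrite subr_gt0.
pose b := Num.max 1 (powR (z / (1 - q)) q^-1).
have b1 : 1 <= b by rewrite le_max lexx.
have zHb : z <= Hq q b.
  have : powR (powR (z / (1 - q)) q^-1) q <= powR b q.
    rewrite ge0_ler_powR ?nnegrE ?powR_ge0 ?(le_trans ler01 b1) ?le_max ?lexx ?orbT//.
    exact: ltW.
  rewrite -powRrM mulVf ?gt_eqF// powRr1; last first.
    by rewrite divr_ge0 ?(le_trans ler01 z1) ?(ltW q1_gt0).
  rewrite ler_pdivrMr// mulrC => zb; rewrite /Hq (le_trans zb)// lerDl.
  by rewrite mulr_ge0 ?powR_ge0 ?(ltW q_gt0).
have Hq_cont : {within `[1, b], continuous (Hq q)}.
  apply: derivable_within_continuous => x /[1!in_itv] /= /andP[x1 _].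
  have -> : Hq q = (1 - q) \*: (@powR R)^~ q + q \*: (@powR R)^~ (q - 1) by [].
  by apply: derivableD; apply: derivableZ; apply: derivable_powR;
    rewrite in_itv /= andbT (lt_le_trans ltr01 x1).
have [|y /[1!in_itv] /andP[y1 _] <-] := @IVT _ _ _ _ z b1 Hq_cont.
  by rewrite Hq1 ge_min le_max z1 zHb orbT.
by exists y.
Qed.

Lemma Hq_invP z : 1 <= z -> 1 <= Hq_inv q z /\ Hq q (Hq_inv q z) = z.
Proof.
by move=> /Hq_surjective[y y1 Hy]; apply: (@xgetPex _ 1 [set y | 1 <= y /\ Hq q y = z]); exists y.
Qed.

Lemma le_powR_of_le_Hq F h X Y v : 0 < h -> 1 < v ->
  (1 - q) * X + q * Y <= F ->
  h * powR v q <= (1 - q) * X + q * (v * Y) ->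
  F <= h * Hq q v -> X <= h * powR v q.
Proof.
move=> h0 v1 XYF hXY Fh; have v0 : 0 < v := lt_trans ltr01 v1.
(* Eliminate Y, then use v H_q(v) - v^q = (1 - q) (v - 1) v^q. *)
have vQ : v * powR v (q - 1) = powR v q by rewrite mulr_powRB1 ?(ltW v0).
have vXYF : v * ((1 - q) * X + q * Y) <= v * F by rewrite ler_pM2l.
have vFh : v * F <= v * (h * Hq q v) by rewrite ler_pM2l.
rewrite -(@ler_pM2l _ ((v - 1) * (1 - q))) ?mulr_gt0 ?subr_gt0//.
move: vXYF vFh; rewrite /Hq; nra.
Qed.

Lemma le_Hq_inv F h X Y : 0 < h -> h <= F ->
  (1 - q) * X + q * Y <= F ->
  (forall w, 1 < w -> h * powR w q <= (1 - q) * X + q * (w * Y)) ->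
  X <= h * powR (Hq_inv q (F / h)) q.
Proof.
move=> h0 hF XYF hXY.
have [] := Hq_invP (_ : 1 <= F / h); first by rewrite ler_pdivlMr ?mul1r.
set w := Hq_inv q (F / h); rewrite le_eqVlt => /predU1P[w1|w1] Hw; last first.
  apply: (le_powR_of_le_Hq h0 w1 XYF (hXY _ w1)).
  by rewrite Hw mulrC divfK ?gt_eqF.
(* H_q^(-1)(F/h) = 1 forces F = h, and the bound is reached as v -> 1+. *)
have Fh : F = h.
  by move: Hw; rewrite -w1 Hq1 => /esym/(congr1 ( *%R^~ h)); rewrite divfK ?gt_eqF// mul1r.
rewrite -w1 powR1 mulr1; apply/unstable.ler_gtP => z hz.
have v1 : 1 < z / h by rewrite ltr_pdivlMr ?mul1r.
rewrite -[z](divfK (lt0r_neq0 h0)) mulrC (le_trans (le_powR_of_le_Hq h0 v1 XYF (hXY _ v1) _))//.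
  by rewrite Fh ler_peMr ?(ltW h0) ?Hq_ge1 ?(lt_trans ltr01 v1).
by rewrite ler_pM2l// ler1_powR ?(ltW v1) ?(ltW q_lt1).
Qed.

End BellmanFunction.

Section CountablePartition.
Context d (T : measurableType d) (R : realType) (mu : {measure set T -> \bar R}).
Variable P : set (set T).
Hypothesis P_countable : countable P.
Hypothesis P_measurable : forall J, P J -> measurable J.
Hypothesis P_disjoint : forall J K x, P J -> P K -> J x -> K x -> J = K.
Hypothesis P_cover : forall x, exists2 J, P J & J x.

Lemma partition_enum : exists F : nat -> set T,
  [/\ forall i, F i = set0 \/ P (F i), trivIset setT F & \bigcup_i F i = setT].
Proof.
have [g g_inj] := countable_injP _ P_countable.
pose F i := xget set0 [set J | P J /\ g J = i].
have FP i : F i = set0 \/ P (F i) /\ g (F i) = i.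
  by rewrite /F; case: xgetP => [J _ [PJ gJ]|_]; [right|left].
exists F; split.
- by move=> i; case: (FP i) => [->|[]]; [left|right].
- move=> i j _ _ [x [Fix Fjx]].
  case: (FP i) => [Fi0|[PFi <-]]; first by move: Fix; rewrite Fi0.
  case: (FP j) => [Fj0|[PFj <-]]; first by move: Fjx; rewrite Fj0.
  by rewrite (P_disjoint PFi PFj Fix Fjx).
- apply/seteqP; split => // x _; have [J PJ Jx] := P_cover x.
  exists (g J) => //; suff -> : F (g J) = J by [].
  apply: xget_unique => // K [PK gK].
  by apply: g_inj => //; exact/mem_set.
Qed.

Lemma partition_ge0_le_integral (g k : T -> \bar R) :
  measurable_fun setT g -> measurable_fun setT k ->
  (forall x, 0 <= g x)%E -> (forall x, 0 <= k x)%E ->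
  (forall J, P J -> \int[mu]_(x in J) g x <= \int[mu]_(x in J) k x)%E ->
  (\int[mu]_x g x <= \int[mu]_x k x)%E.
Proof.
move=> mg mk g0 k0 gk; have [F [FP tF FT]] := partition_enum.
have mF i : measurable (F i) by case: (FP i) => [->|/P_measurable].
rewrite -FT !ge0_integral_bigcup ?FT//.
apply: lee_nneseries => [i _ _|i _]; first exact: integral_ge0.
by case: (FP i) => [->|/gk//]; rewrite !integral_set0.
Qed.

Lemma partition_measurable_fun (g : T -> R) :
  (forall J x y, P J -> J x -> J y -> g x = g y) -> measurable_fun setT g.
Proof.
move=> g_const _ B mB; rewrite setTI; have [F [FP _ FT]] := partition_enum.
rewrite -[g @^-1` B]setTI -FT setI_bigcupl; apply: bigcupT_measurable => i.
case: (FP i) => [->|PF]; first by rewrite set0I.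
have [[y [Fy By]]|noB] := pselect (exists y, F i y /\ B (g y)).
  suff -> : F i `&` g @^-1` B = F i by exact: P_measurable.
  apply/seteqP; split => [x []//|x Fx]; split => //.
  by rewrite /preimage /= (g_const _ _ _ PF Fx Fy).
suff -> : F i `&` g @^-1` B = set0 by [].
by apply/seteqP; split => // x [Fx Bx]; apply: noB; exists x.
Qed.

End CountablePartition.

Section DyadicMaximalFunction.
Context d (T : measurableType d) (R : realType) (mu : probability T R).
Variables (Tr : set (set T)) (C : set T -> set (set T)).
Hypothesis Tr_measurable : forall I, Tr I -> measurable I /\ (0 < mu I)%E.
Hypothesis C_children : forall I, Tr I ->
  [/\ C I `<=` Tr /\ countable (C I),
      (exists J K, [/\ C I J, C I K & J <> K]),
      (forall J K, C I J -> C I K -> J <> K -> J `&` K = set0),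
      (forall J, C I J -> J `<=` I) &
      \bigcup_(J in C I) J = I].
Hypothesis Tr_levels : Tr = \bigcup_(m in [set: nat]) tree_level C m.

Local Notation level := (tree_level C).

Lemma level_tree n I : level n I -> Tr I.
Proof. by move=> ?; rewrite Tr_levels; exists n. Qed.

Lemma level_cover n x : exists2 I, level n I & I x.
Proof.
elim: n => [|n [I lI Ix]]; first by exists setT.
have [_ _ _ _ cov] := C_children (level_tree lI).
by move: Ix; rewrite -cov => -[J CJ Jx]; exists J => //; exists I.
Qed.

Lemma level_disjoint n I J x : level n I -> level n J -> I x -> J x -> I = J.
Proof.
elim: n I J => [|n IH] I J; first by move=> /= -> ->.
move=> [I' lI' CI] [J' lJ' CJ] Ix Jx.
have [_ _ _ subI _] := C_children (level_tree lI').
have [_ _ _ subJ _] := C_children (level_tree lJ').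
have eI'J' := IH _ _ lI' lJ' (subI _ CI _ Ix) (subJ _ CJ _ Jx); subst J'.
have [_ _ disj _ _] := C_children (level_tree lI').
apply: contrapT => IJ.
by have /seteqP[/(_ x (conj Ix Jx))] := disj _ _ CI CJ IJ.
Qed.

Lemma level_refine n k J : (k <= n)%N -> level n J ->
  exists2 I, level k I & J `<=` I.
Proof.
elim: n J => [|n IH] J; first by rewrite leqn0 => /eqP -> lJ; exists J.
rewrite leq_eqVlt => /orP[/eqP -> lJ|]; first by exists J.
rewrite ltnS => kn [J' lJ' CJ]; have [I lI J'I] := IH J' kn lJ'.
have [_ _ _ subJ _] := C_children (level_tree lJ').
by exists I => //; apply: subset_trans J'I; exact: subJ.
Qed.

Lemma level_countable n : countable (level n).
Proof.
elim: n => [|n IH]; first exact: countable1.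
apply: bigcup_countable => // I lI.
by have [[_ ?] _ _ _ _] := C_children (level_tree lI).
Qed.

Lemma level_measurable n J : level n J -> measurable J.
Proof. by move=> /level_tree /Tr_measurable[]. Qed.

Definition cell n x : set T := xget setT [set I | level n I /\ I x].

Lemma cellP n x : level n (cell n x) /\ cell n x x.
Proof.
have [I lI Ix] := level_cover n x.
by apply: (@xgetPex _ setT [set I | level n I /\ I x]); exists I.
Qed.

Lemma cellE n x I : level n I -> I x -> cell n x = I.
Proof. by move=> lI Ix; have [lc cx] := cellP n x; exact: level_disjoint lc lI cx Ix. Qed.

Lemma cell_refine n k J x y : (k <= n)%N -> level n J -> J x -> J y ->
  cell k x = cell k y.
Proof.
move=> kn lJ Jx Jy; have [I lI JI] := level_refine kn lJ.
by rewrite (cellE lI (JI _ Jx)) (cellE lI (JI _ Jy)).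
Qed.

Lemma fine_measure_tree J : Tr J -> (fine (mu J))%:E = mu J /\ 0 < fine (mu J).
Proof.
move=> TJ; have [mJ J0] := Tr_measurable TJ.
have muJ : (fine (mu J))%:E = mu J.
  by rewrite fineK// ge0_fin_numE// (le_lt_trans (probability_le1 mu mJ)) ?ltey.
by split; rewrite // -lte_fin muJ.
Qed.

Variables (phi : T -> R) (q f : R).
Hypothesis q01 : 0 < q < 1.
Hypothesis f_gt0 : 0 < f.
Hypothesis phi_ge0 : forall x, 0 <= phi x.
Hypothesis phi_measurable : measurable_fun setT phi.
Hypothesis phi_integrable : mu.-integrable setT (EFin \o phi).
Hypothesis phi_integral : (\int[mu]_x (phi x)%:E = f%:E)%E.

Let q_gt0 : 0 < q. Proof. by case/andP: q01. Qed.
Let q1_gt0 : 0 < 1 - q. Proof. by rewrite subr_gt0; case/andP: q01. Qed.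

Definition avg (I : set T) : R :=
  fine (\int[mu]_(y in I) (phi y)%:E) / fine (mu I).

Lemma integral_avg I : Tr I ->
  (\int[mu]_(y in I) (phi y)%:E)%E = (fine (mu I) * avg I)%:E.
Proof.
move=> TI; have [mI _] := Tr_measurable TI; have [_ muI0] := fine_measure_tree TI.
rewrite /avg mulrC divfK ?gt_eqF// fineK//.
by apply: integrable_fin_num => //; exact: integrableS phi_integrable.
Qed.

Lemma avg_ge0 I : Tr I -> 0 <= avg I.
Proof.
move=> TI; have [mI _] := Tr_measurable TI; have [_ muI0] := fine_measure_tree TI.
rewrite -(ler_pM2l muI0) mulr0 -lee_fin -integral_avg//.
by apply: integral_ge0 => x _; rewrite lee_fin.
Qed.

Lemma avg_setT : avg setT = f.
Proof. by rewrite /avg probability_setT divr1 phi_integral. Qed.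

Lemma avg_cell0 x : avg (cell 0 x) = f.
Proof. by have [-> _] := cellP 0 x; exact: avg_setT. Qed.

Fixpoint runmax n x : R :=
  if n is n'.+1 then Num.max (runmax n' x) (avg (cell n x)) else avg (cell 0 x).

Lemma le_runmax k n x : (k <= n)%N -> avg (cell k x) <= runmax n x.
Proof.
elim: n => [|n IH]; first by rewrite leqn0 => /eqP ->.
rewrite leq_eqVlt => /orP[/eqP ->|]; first by rewrite /= le_max lexx orbT.
by rewrite ltnS => /IH kn /=; rewrite le_max kn.
Qed.

Lemma runmax_gt0 n x : 0 < runmax n x.
Proof. by rewrite (lt_le_trans f_gt0)// -(avg_cell0 x) le_runmax. Qed.

Lemma runmax_attained n x : exists2 k, (k <= n)%N & runmax n x = avg (cell k x).
Proof.
elim: n => [|n [k kn IH]]; first by exists 0%N.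
by rewrite /= IH; case: leP => _; [exists n.+1|exists k => //; exact: leqW].
Qed.

Lemma runmax_nondecreasing x : nondecreasing_seq (runmax ^~ x).
Proof. by apply/nondecreasing_seqP => n /=; rewrite le_max lexx. Qed.

Lemma runmax_cell n m J x y : (m <= n)%N -> level n J -> J x -> J y ->
  runmax m x = runmax m y.
Proof.
move=> mn lJ Jx Jy; elim: m mn => [|m IH] mn /=.
  by rewrite (cell_refine _ lJ Jx Jy).
by rewrite IH ?(ltnW mn)// (cell_refine mn lJ Jx Jy).
Qed.

Lemma measurable_runmax n : measurable_fun setT (runmax n).
Proof.
apply: (@partition_measurable_fun _ _ _ (level n)) => [|J|J K x|x|J x y lJ Jx Jy].
- exact: level_countable.
- exact: level_measurable.
- exact: level_disjoint.
- by have [I lI Ix] := level_cover n x; exists I.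
- exact: runmax_cell lJ Jx Jy.
Qed.


Lemma measurable_powR_runmax n r : measurable_fun setT (fun x => powR (runmax n x) r).
Proof. exact: measurableT_comp (measurable_powR _) (measurable_runmax n). Qed.

Lemma measurable_bellman_runmax n (g : T -> R) : measurable_fun setT g ->
  measurable_fun setT (fun x => (bellman q (runmax n x) (g x))%:E).
Proof.
move=> mg; apply/measurable_EFinP; apply: measurable_funD; apply: measurable_funM => //.
  exact: measurable_powR_runmax.
by apply: measurable_funM => //; exact: measurable_powR_runmax.
Qed.

Lemma bellman_runmax_ge0 n x : 0 <= bellman q (runmax n x) (phi x).
Proof. by rewrite /bellman addr_ge0 ?mulr_ge0 ?powR_ge0 ?(ltW q_gt0) ?(ltW q1_gt0). Qed.

Lemma integral_bellman J M : Tr J ->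
  (\int[mu]_(x in J) (bellman q M (phi x))%:E)%E = (fine (mu J) * bellman q M (avg J))%:E.
Proof.
move=> TJ; have [mJ _] := Tr_measurable TJ; have [muJ _] := fine_measure_tree TJ.
have mphi : measurable_fun J (EFin \o phi).
  by apply/measurable_EFinP; exact: measurable_funS phi_measurable.
under eq_integral => x _ do rewrite /bellman EFinD (EFinM (q * _)).
have cst_ge0 : 0 <= (1 - q) * powR M q by rewrite mulr_ge0 ?powR_ge0 ?(ltW q1_gt0).
have coef_ge0 : 0 <= q * powR M (q - 1) by rewrite mulr_ge0 ?powR_ge0 ?(ltW q_gt0).
rewrite ge0_integralD//; last 2 first.
- by move=> x _; rewrite mule_ge0 ?lee_fin.
- exact: measurable_funeM.
rewrite (@integral_cst _ _ _ mu J mJ ((1 - q) * powR M q)%:E).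
rewrite ge0_integralZl_EFin//; last by move=> x _; rewrite lee_fin.
rewrite integral_avg//; set m := fine (mu J) in muJ *.
rewrite -[X in (_ * X + _)%E]muJ -!EFinM -EFinD /bellman.
by congr EFin; ring.
Qed.

Lemma integral_bellman_runmax_step n :
  (\int[mu]_x (bellman q (runmax n.+1 x) (phi x))%:E <=
   \int[mu]_x (bellman q (runmax n x) (phi x))%:E)%E.
Proof.
apply: (@partition_ge0_le_integral _ _ _ _ (level n.+1)) => [|J|J K x|x|||||J lJ].
- exact: level_countable.
- exact: level_measurable.
- exact: level_disjoint.
- by have [I lI Ix] := level_cover n.+1 x; exists I.
- exact: measurable_bellman_runmax _ phi_measurable.
- exact: measurable_bellman_runmax _ phi_measurable.
- by move=> x; rewrite lee_fin bellman_runmax_ge0.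
- by move=> x; rewrite lee_fin bellman_runmax_ge0.
(* On J, runmax n is constant and runmax n.+1 is its max with avg J; as bellman is
   affine in its last argument, integrating over J replaces phi by avg J. *)
have TJ := level_tree lJ; have [_ muJ0] := fine_measure_tree TJ.
have [x0 Jx0] : J !=set0.
  apply/set0P/negP => /eqP J0; have [_] := Tr_measurable TJ.
  by rewrite J0 measure0 ltxx.
have runmaxJ x : J x -> runmax n x = runmax n x0.
  by move=> Jx; exact: runmax_cell (leqnSn n) lJ Jx Jx0.
have avgJ x : J x -> avg (cell n.+1 x) = avg J by move=> Jx; rewrite (cellE lJ Jx).
rewrite (eq_integral (fun x => (bellman q (Num.max (runmax n x0) (avg J)) (phi x))%:E)); last first.
  by move=> x /set_mem Jx; rewrite /= runmaxJ // avgJ.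
rewrite [leRHS](eq_integral (fun x => (bellman q (runmax n x0) (phi x))%:E)); last first.
  by move=> x /set_mem Jx; rewrite runmaxJ.
rewrite !integral_bellman// lee_fin ler_pM2l//.
exact: bellman_max (runmax_gt0 n x0) (avg_ge0 TJ).
Qed.

Lemma integral_bellman_runmax_le n :
  (\int[mu]_x (bellman q (runmax n x) (phi x))%:E <= (powR f q)%:E)%E.
Proof.
elim: n => [|n IH]; last exact: le_trans (integral_bellman_runmax_step n) IH.
under eq_integral => x _ do rewrite /= avg_cell0.
rewrite integral_bellman; last exact: level_tree (erefl : level 0 setT).
by rewrite probability_setT mul1r avg_setT (bellman_diag q01) ?(ltW f_gt0).
Qed.

Lemma integral_bellman_runmax_scale n c : 0 <= c ->
  (\int[mu]_x (bellman q (runmax n x) (c * phi x))%:E =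
   (1 - q)%:E * \int[mu]_x (powR (runmax n x) q)%:E +
   (q * c)%:E * \int[mu]_x (powR (runmax n x) (q - 1) * phi x)%:E)%E.
Proof.
move=> c0; have mX := measurable_powR_runmax n q.
have mY : measurable_fun setT (fun x => powR (runmax n x) (q - 1) * phi x).
  exact: measurable_funM (measurable_powR_runmax n (q - 1)) phi_measurable.
rewrite -!ge0_integralZl_EFin ?mulr_ge0 ?(ltW q_gt0) ?(ltW q1_gt0)//; last 4 first.
- by move=> x _; rewrite lee_fin mulr_ge0 ?powR_ge0.
- exact/measurable_EFinP.
- by move=> x _; rewrite lee_fin powR_ge0.
- exact/measurable_EFinP.
rewrite -ge0_integralD//; last 4 first.
- by move=> x _; rewrite -EFinM lee_fin mulr_ge0 ?powR_ge0 ?(ltW q1_gt0).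
- by apply: measurable_funeM; exact/measurable_EFinP.
- by move=> x _; rewrite -EFinM lee_fin !mulr_ge0 ?powR_ge0 ?(ltW q_gt0).
- by apply: measurable_funeM; exact/measurable_EFinP.
by apply: eq_integral => x _; rewrite -!EFinM -EFinD /bellman; congr EFin; ring.
Qed.

Variable h : R.
Hypothesis h_gt0 : 0 < h.
Hypothesis h_le : h <= powR f q.
Hypothesis phi_powR_integral : (\int[mu]_x (powR (phi x) q)%:E = h%:E)%E.

Lemma integral_powR_runmax_le n :
  (\int[mu]_x (powR (runmax n x) q)%:E <= (h * powR (Hq_inv q (powR f q / h)) q)%:E)%E.
Proof.
set Xn := (\int[mu]_x _)%E; set Yn := (\int[mu]_x (powR (runmax n x) (q - 1) * phi x)%:E)%E.
have Xn_ge0 : (0 <= Xn)%E by apply: integral_ge0 => x _; rewrite lee_fin powR_ge0.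
have Yn_ge0 : (0 <= Yn)%E by apply: integral_ge0 => x _; rewrite lee_fin mulr_ge0 ?powR_ge0.
have XYf : ((1 - q)%:E * Xn + q%:E * Yn <= (powR f q)%:E)%E.
  rewrite /Xn /Yn (_ : q%:E = (q * 1)%:E); last by rewrite mulr1.
  rewrite -integral_bellman_runmax_scale//.
  under eq_integral do rewrite mul1r.
  exact: integral_bellman_runmax_le.
have [/fineK Xfin /fineK Yfin] := fin_num_of_ge0_lincomb_le q1_gt0 q_gt0 Xn_ge0 Yn_ge0 XYf.
rewrite -Xfin lee_fin; apply: (le_Hq_inv q01 h_gt0 h_le (Y := fine Yn)).
  by rewrite -lee_fin EFinD !EFinM Xfin Yfin.
move=> w w1; have w0 : 0 < w := lt_trans ltr01 w1.
rewrite mulrA -lee_fin EFinD (EFinM (q * w)) (EFinM (1 - q)) Xfin Yfin /Xn /Yn.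
rewrite -integral_bellman_runmax_scale ?(ltW w0)// mulrC EFinM.
rewrite -phi_powR_integral -ge0_integralZl_EFin ?powR_ge0//; last 2 first.
- by move=> x _; rewrite lee_fin powR_ge0.
- by apply/measurable_EFinP; exact: measurableT_comp (measurable_powR _) phi_measurable.
apply: ge0_le_integral => //.
- by move=> x _; rewrite -EFinM lee_fin mulr_ge0 ?powR_ge0.
- apply: measurable_funeM; apply/measurable_EFinP.
  exact: measurableT_comp (measurable_powR _) phi_measurable.
- exact/measurable_bellman_runmax/measurable_funM.
move=> x _; rewrite -EFinM lee_fin -powRM ?(ltW w0)//.
by rewrite (powR_le_bellman q01) ?mulr_ge0 ?(ltW w0) ?runmax_gt0.
Qed.

Lemma dyadic_maxE x :
  dyadic_max mu Tr phi x = ereal_sup (range (fun k => (avg (cell k x))%:E)).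
Proof.
have avgE I : Tr I ->
    (((fine (mu I))^-1)%:E * \int[mu]_(y in I) (`|phi y|)%:E)%E = (avg I)%:E.
  move=> TI; have [_ muI0] := fine_measure_tree TI.
  under eq_integral => y _ do rewrite ger0_norm//.
  by rewrite integral_avg// -EFinM mulKf ?gt_eqF.
rewrite /dyadic_max; congr ereal_sup; apply/seteqP; split => z /=.
  move=> [I [TI Ix] <-]; have [k _ lI] : (\bigcup_(m in setT) level m) I by rewrite -Tr_levels.
  by exists k => //; rewrite (cellE lI Ix) -avgE.
move=> [k _ <-]; have [lc cx] := cellP k x.
have Tc := level_tree lc.
by exists (cell k x); rewrite ?avgE.
Qed.

Lemma ereal_sup_avg_cell_runmax x :
  ereal_sup (range (fun k => (avg (cell k x))%:E)) =
  ereal_sup (range (fun n => (runmax n x)%:E)).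
Proof.
apply/eqP; rewrite eq_le; apply/andP; split; apply: ge_ereal_sup => _ [n _ <-].
  apply: (@le_trans _ _ (runmax n x)%:E); first by rewrite lee_fin le_runmax.
  by apply: ereal_sup_ubound; exists n.
have [k _ ->] := runmax_attained n x.
by apply: ereal_sup_ubound; exists k.
Qed.

Lemma powR_runmax_nondecreasing x :
  nondecreasing_seq (fun n => (powR (runmax n x) q)%:E).
Proof.
move=> m n mn; rewrite lee_fin ge0_ler_powR ?nnegrE ?(ltW q_gt0) ?runmax_nondecreasing//.
all: exact: ltW (runmax_gt0 _ _).
Qed.

Lemma poweR_dyadic_max x :
  poweR (dyadic_max mu Tr phi x) q = limn (fun n => (powR (runmax n x) q)%:E).
Proof.
rewrite dyadic_maxE ereal_sup_avg_cell_runmax poweR_ereal_sup// => [|n].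
  by apply/esym/cvg_lim => //; apply/ereal_nondecreasing_cvgn/powR_runmax_nondecreasing.
exact: ltW (runmax_gt0 n x).
Qed.

Lemma integral_poweR_dyadic_max_le :
  (\int[mu]_x poweR (dyadic_max mu Tr phi x) q <=
   (h * powR (Hq_inv q (powR f q / h)) q)%:E)%E.
Proof.
under eq_integral do rewrite poweR_dyadic_max.
rewrite monotone_convergence//; last 3 first.
- by move=> n; apply/measurable_EFinP; exact: measurable_powR_runmax.
- by move=> n x _; rewrite lee_fin powR_ge0.
- by move=> x _; exact: powR_runmax_nondecreasing.
apply: lime_le; last exact: nearW integral_powR_runmax_le.
apply: ereal_nondecreasing_is_cvgn => m n mn; apply: ge0_le_integral => //.
- by move=> x _; rewrite lee_fin powR_ge0.
- by apply/measurable_EFinP; exact: measurable_powR_runmax.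
- by apply/measurable_EFinP; exact: measurable_powR_runmax.
- by move=> x _; exact: powR_runmax_nondecreasing.
Qed.

End DyadicMaximalFunction.

Theorem lemma3p1 (d : measure_display) (T : measurableType d) (R : realType)
  (mu : probability T R) (Tr : set (set T)) (q f h : R) (phi : T -> R) :
  non_atomic mu -> is_tree mu Tr ->
  0 < q < 1 -> 0 < h -> h <= powR f q ->
  measurable_fun setT phi -> mu.-integrable setT (EFin \o phi) ->
  (forall x, 0 <= phi x) ->
  (\int[mu]_x (phi x)%:E = f%:E)%E ->
  (\int[mu]_x (powR (phi x) q)%:E = h%:E)%E ->
  (\int[mu]_x poweR (dyadic_max mu Tr phi x) q <= (h * omega_q q (powR f q / h))%:E)%E.
Proof.
(* Non-atomicity is only needed for the sharpness of the bound. *)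
move=> _ [C [[_ Tr_measurable] C_children Tr_levels _]] q01 h_gt0 h_le mphi iphi phi_ge0
  phi_integral phi_powR_integral.
have f_gt0 : 0 < f.
  rewrite lt_neqAle -lee_fin -phi_integral integral_ge0 ?andbT => [|x _]; last by rewrite lee_fin.
  apply: contraTneq h_le => <-; rewrite powR0 ?gt_eqF -?ltNge//; by case/andP: q01.
exact: (integral_poweR_dyadic_max_le Tr_measurable C_children Tr_levels q01 f_gt0
  phi_ge0 mphi iphi phi_integral h_gt0 h_le phi_powR_integral).
Qed.
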